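(* Let $\Phi$ be a Young function such that the limits $p_0=\lim_{t\to0^+}\frac{t\Phi'(t)}{\Phi(t)}$ and $p_\infty=\lim_{t\to\infty}\frac{t\Phi'(t)}{\Phi(t)}$ exist as finite real numbers. Then $p_{[\Phi]}=\max\{p_0,p_\infty\}$ and $q_{[\Phi]}=\min\{p_0,p_\infty\}$.
   Context: A Young function is a convex function $\Phi:[0,\infty)\to[0,\infty)$ with $\Phi(0)=0$, $\Phi(t)>0$ for $t>0$, and $\lim_{t\to\infty}\Phi(t)=\infty$. $\Phi'$ denotes the right derivative of $\Phi$. The Lebesgue exponents of $\Phi$ are $p_\Phi=\sup_{t>0}\frac{t\Phi'(t)}{\Phi(t)}$ and $q_\Phi=\inf_{t>0}\frac{t\Phi'(t)}{\Phi(t)}$. Two Young functions $\Phi,\Psi$ are equivalent if there is $C\ge1$ with $C^{-1}\Psi(t)\le\Phi(t)\le C\Psi(t)$ for all $t\ge0$; $[\Phi]$ denotes the set of Young functions equivalent to $\Phi$, and $p_{[\Phi]}=\inf\{p_\Psi:\Psi\in[\Phi]\}$, $q_{[\Phi]}=\sup\{q_\Psi:\Psi\in[\Phi]\}$. *)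

From HB Require Import structures.
From mathcomp Require Import all_boot all_order all_algebra.
From mathcomp Require Import all_classical all_reals all_analysis.
Set Implicit Arguments. Unset Strict Implicit. Unset Printing Implicit Defensive.
Import Order.TTheory GRing.Theory Num.Theory.
Import numFieldNormedType.Exports.
Local Open Scope classical_set_scope.
Local Open Scope ring_scope.

Section Young.
Variable R : realType.

Definition convex_on_nonneg (f : R -> R) : Prop :=
  forall x y (l : R), 0 <= x -> 0 <= y -> 0 <= l -> l <= 1 ->
    f (l * x + (1 - l) * y) <= l * f x + (1 - l) * f y.

(* A Young function Phi : [0,oo) -> [0,oo) (values at negative reals are
   irrelevant). *)
Definition young (f : R -> R) : Prop :=
  [/\ convex_on_nonneg f,
      f 0 = 0,
      (forall t, 0 < t -> 0 < f t) &
      f x @[x --> +oo] --> +oo].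

Definition rderiv (f : R -> R) (t : R) : R :=
  lim ((fun h => (f (t + h) - f t) / h) @ 0^'+).

Definition lindex (f : R -> R) (t : R) : R := t * rderiv f t / f t.

Definition p_exp (f : R -> R) : \bar R :=
  ereal_sup [set (lindex f t)%:E | t in [set t : R | 0 < t]].
Definition q_exp (f : R -> R) : \bar R :=
  ereal_inf [set (lindex f t)%:E | t in [set t : R | 0 < t]].

Definition young_equiv (f g : R -> R) : Prop :=
  exists C : R, 1 <= C /\
    forall t, 0 <= t -> C^-1 * g t <= f t /\ f t <= C * g t.

Definition young_class (f : R -> R) : set (R -> R) :=
  [set g | young g /\ young_equiv f g].

Definition p_class (f : R -> R) : \bar R :=
  ereal_inf [set p_exp g | g in young_class f].
Definition q_class (f : R -> R) : \bar R :=
  ereal_sup [set q_exp g | g in young_class f].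

End Young.

From HB Require Import structures.
From mathcomp Require Import all_boot all_order all_algebra.
From mathcomp Require Import all_classical all_reals all_analysis.
From mathcomp Require Import ring lra.
Import Order.TTheory GRing.Theory Num.Theory.
Import numFieldNormedType.Exports.
Local Open Scope classical_set_scope.
Local Open Scope ring_scope.

(* Write i(t) = t Phi'(t) / Phi(t).  If, near 0 or near oo, i stays above r1
   for one Young function and below r2 < r1 for an equivalent one, the support
   lines of both functions along a geometric sequence t, rho t, ..., rho^n t
   make their ratio grow like (A B / rho)^n with A B > rho, which contradicts
   equivalence; this gives p >= max(p0, poo) and q <= min(p0, poo) for every
   member of the class.  Conversely, for eps > 0, near 0 and near oo the index
   of Phi is already within eps of the limits, and on the compact range in
   between Phi is replaced by its maximum with an equivalent convex majorant
   whose index is controlled there: a multiple of the tangent continuation of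
   Phi for p, a multiple of Phi (c t) - Phi M for q. *)

Set Implicit Arguments.
Unset Strict Implicit.

Definition diff_quot (R : realType) (g : R -> R) (s h : R) : R :=
  (g (s + h) - g s) / h.

Definition support_line (R : realType) (g : R -> R) (z m : R) : Prop :=
  forall x, 0 <= x -> g z + m * (x - z) <= g x.

Lemma ler_pdiv_cross (R : realFieldType) (a b h1 h2 : R) : 0 < h1 -> 0 < h2 ->
  a * h2 <= b * h1 -> a / h1 <= b / h2.
Proof. by move=> h10 h20 H; rewrite ler_pdivrMr // mulrAC ler_pdivlMr. Qed.

Section ConvexOnNonneg.
Context {R : realType}.
Implicit Types (g h : R -> R).

Lemma convex_on_nonneg_max g h : convex_on_nonneg g -> convex_on_nonneg h ->
  convex_on_nonneg (fun x => Num.max (g x) (h x)).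
Proof.
move=> cg ch x y l x0 y0 l0 l1; rewrite ge_max.
have le_g := cg x y l x0 y0 l0 l1; have le_h := ch x y l x0 y0 l0 l1.
have [gx hx] : g x <= Num.max (g x) (h x) /\ h x <= Num.max (g x) (h x).
  by rewrite !le_max !lexx orbT.
have [gy hy] : g y <= Num.max (g y) (h y) /\ h y <= Num.max (g y) (h y).
  by rewrite !le_max !lexx orbT.
by apply/andP; split; [apply: le_trans le_g _ | apply: le_trans le_h _];
  apply: lerD; apply: ler_wpM2l => //; lra.
Qed.

Lemma convex_on_nonneg_scale k g : 0 <= k -> convex_on_nonneg g ->
  convex_on_nonneg (fun x => k * g x).
Proof.
move=> k0 cg x y l x0 y0 l0 l1; have := ler_wpM2l k0 (cg x y l x0 y0 l0 l1).
by rewrite mulrDr (mulrCA k l) (mulrCA k (1 - l)).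
Qed.

Lemma convex_on_nonneg_comp_scale c D g : 0 <= c -> convex_on_nonneg g ->
  convex_on_nonneg (fun x => g (c * x) - D).
Proof.
move=> c0 cg x y l x0 y0 l0 l1.
have := cg (c * x) (c * y) l (mulr_ge0 c0 x0) (mulr_ge0 c0 y0) l0 l1.
rewrite (_ : l * (c * x) + (1 - l) * (c * y) = c * (l * x + (1 - l) * y)).
  lra.
by ring.
Qed.

Lemma convex_on_nonneg_support g : g 0 = 0 -> (forall x, 0 <= x -> 0 <= g x) ->
  (forall z, 0 < z -> exists m, support_line g z m) -> convex_on_nonneg g.
Proof.
move=> g0 g_ge0 g_supp x y l x0 y0 l0 l1.
have := g_ge0 x x0; have := g_ge0 y y0.
have : 0 <= l * x + (1 - l) * y by nra.
rewrite le_eqVlt => /orP[/eqP <-|z0]; first by rewrite g0; nra.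
have [m Hm] := g_supp _ z0; have := Hm x x0; have := Hm y y0; nra.
Qed.

End ConvexOnNonneg.

Section RightDerivative.
Context {R : realType}.
Variable g : R -> R.
Hypothesis cg : convex_on_nonneg g.

Lemma convex_slope3 x y z : 0 <= x -> x < y -> y < z ->
  g y * (z - x) <= (z - y) * g x + (y - x) * g z.
Proof.
move=> x0 xy yz; have zx : 0 < z - x by lra.
have l0 : 0 <= (z - y) / (z - x) by apply: divr_ge0; lra.
have l1 : (z - y) / (z - x) <= 1 by rewrite ler_pdivrMr //; lra.
have := cg x0 (ltW (le_lt_trans x0 (lt_trans xy yz))) l0 l1.
rewrite (_ : _ * x + _ * z = y); last by field; lra.
rewrite -(ler_pM2r zx) (_ : (_ + _) * (z - x) = (z - y) * g x + (y - x) * g z) //.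
by field; lra.
Qed.

Lemma diff_quot_nondecr s h1 h2 : 0 <= s -> 0 < h1 -> h1 <= h2 ->
  diff_quot g s h1 <= diff_quot g s h2.
Proof.
move=> s0 h10; rewrite le_eqVlt => /orP[/eqP <- //|h12].
have := @convex_slope3 s (s + h1) (s + h2) s0 ltac:(lra) ltac:(lra).
by move=> H; apply: ler_pdiv_cross; nra.
Qed.

Lemma slope_le_diff_quot x s h : 0 <= x -> x < s -> 0 < h ->
  (g s - g x) / (s - x) <= diff_quot g s h.
Proof.
move=> x0 xs h0; have := @convex_slope3 x s (s + h) x0 xs ltac:(lra).
by move=> H; apply: ler_pdiv_cross; nra.
Qed.

(* Monotone difference quotients, bounded below by a chord slope, converge. *)
Lemma diff_quot_cvg s : 0 < s -> diff_quot g s h @[h --> 0^'+] --> rderiv g s.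
Proof.
move=> s0; suff : cvg (diff_quot g s h @[h --> 0^'+]) by [].
apply/cvg_ex; eexists.
apply: (@nondecreasing_at_right_cvgr _ _ 0 (BLeft 1)); first by rewrite bnd_simp.
- move=> a b; rewrite !in_itv /= => /andP[a0 _] /andP[b0 _] ab.
  exact: diff_quot_nondecr (ltW s0) a0 ab.
- exists ((g s - g 0) / (s - 0)) => y [h]; rewrite /= in_itv /= => /andP[h0 _] <-.
  exact: slope_le_diff_quot.
Qed.

Lemma rderiv_le_diff_quot s h : 0 < s -> 0 < h -> rderiv g s <= diff_quot g s h.
Proof.
move=> s0 h0; apply: limr_le; first exact: diff_quot_cvg.
near=> k; apply: diff_quot_nondecr (ltW s0) _ _; first by near: k; exact: nbhs_right_gt.
by near: k; apply: nbhs_right_ltW.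
Unshelve. all: by end_near.
Qed.

Lemma rderiv_ge B s : 0 < s -> (forall h, 0 < h -> B <= diff_quot g s h) ->
  B <= rderiv g s.
Proof.
move=> s0 HB; apply: limr_ge; first exact: diff_quot_cvg.
by near=> h; apply: HB; near: h; exact: nbhs_right_gt.
Unshelve. all: by end_near.
Qed.

Lemma rderiv_support s x : 0 < s -> 0 <= x -> g s + rderiv g s * (x - s) <= g x.
Proof.
move=> s0 x0; have [xs|sx|->] := ltgtP x s; last by rewrite subrr mulr0 addr0.
- have : (g s - g x) / (s - x) <= rderiv g s.
    by apply: rderiv_ge => // h h0; exact: slope_le_diff_quot.
  rewrite ler_pdivrMr; lra.
- have := @rderiv_le_diff_quot s (x - s) s0 ltac:(lra).
  rewrite /diff_quot (_ : s + (x - s) = x); last by ring.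
  rewrite ler_pdivlMr; lra.
Qed.

Lemma rderiv_nondecr s s' : 0 < s -> s <= s' -> rderiv g s <= rderiv g s'.
Proof.
move=> s0; rewrite le_eqVlt => /orP[/eqP <- //|ss'].
have := rderiv_support s0 (ltW (lt_trans s0 ss')).
have := rderiv_support (lt_trans s0 ss') (ltW s0).
nra.
Qed.

Lemma rderiv_near_eq h s : 0 < s -> g s = h s ->
  (\forall k \near 0^'+, g (s + k) = h (s + k)) -> rderiv h s = rderiv g s.
Proof.
move=> s0 gh Hnear; apply: cvg_lim => //.
apply: cvg_trans (diff_quot_cvg s0); apply: near_eq_cvg.
by apply: filterS Hnear => k ghk; rewrite /diff_quot ghk gh.
Qed.

Lemma rderivZ k s : 0 < s -> rderiv (fun x => k * g x) s = k * rderiv g s.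
Proof.
move=> s0; apply: cvg_lim => //.
have -> : (fun h => diff_quot (fun x => k * g x) s h) =
          (fun h => k * diff_quot g s h).
  by apply/funext => h; rewrite /diff_quot -mulrBr mulrA.
exact: cvgM (cvg_cst k) (diff_quot_cvg s0).
Qed.

End RightDerivative.

Section RightDerivativeMax.
Context {R : realType}.
Implicit Types (g h : R -> R).

Lemma diff_quot_max_le g h s k : 0 < k ->
  diff_quot (fun x => Num.max (g x) (h x)) s k <=
  Num.max (diff_quot g s k) (diff_quot h s k).
Proof.
move=> k0; rewrite /diff_quot le_max.
have [gs hs] : g s <= Num.max (g s) (h s) /\ h s <= Num.max (g s) (h s).
  by rewrite !le_max !lexx orbT.
have k1 : 0 < k^-1 by rewrite invr_gt0.
by case: (leP (h (s + k)) (g (s + k))) => H; apply/orP; [left | right];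
  rewrite ler_pM2r //; lra.
Qed.

Lemma diff_quot_le_touch g h s k : 0 < k -> g s = h s -> g (s + k) <= h (s + k) ->
  diff_quot g s k <= diff_quot h s k.
Proof. by move=> k0 gh le; rewrite /diff_quot gh ler_pM2r ?invr_gt0 // lerD2r. Qed.

Lemma rderiv_max_le g h s : convex_on_nonneg g -> convex_on_nonneg h -> 0 < s ->
  rderiv (fun x => Num.max (g x) (h x)) s <= Num.max (rderiv g s) (rderiv h s).
Proof.
move=> cg ch s0; apply/ler_addgt0Pr => e e0.
apply: limr_le.
  by apply: (@diff_quot_cvg _ (fun x => Num.max (g x) (h x))) => //;
    exact: convex_on_nonneg_max.
have lt_g : \forall k \near 0^'+, diff_quot g s k < rderiv g s + e.
  by apply: (cvgr_lt _ (diff_quot_cvg cg s0)); rewrite ltrDl.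
have lt_h : \forall k \near 0^'+, diff_quot h s k < rderiv h s + e.
  by apply: (cvgr_lt _ (diff_quot_cvg ch s0)); rewrite ltrDl.
near=> k; apply: le_trans (diff_quot_max_le _ _ _ _) _.
  by near: k; exact: nbhs_right_gt.
have [mg mh] : rderiv g s <= Num.max (rderiv g s) (rderiv h s) /\
               rderiv h s <= Num.max (rderiv g s) (rderiv h s).
  by rewrite !le_max !lexx orbT.
rewrite ge_max; apply/andP; split.
- apply: le_trans (ltW _) _; first by near: k; exact: lt_g.
  by rewrite lerD2r.
- apply: le_trans (ltW _) _; first by near: k; exact: lt_h.
  by rewrite lerD2r.
Unshelve. all: by end_near.
Qed.

End RightDerivativeMax.

Lemma bernoulli_ler_exprn (R : realFieldType) (q : R) n : 1 <= q ->
  1 + n%:R * (q - 1) <= q ^+ n.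
Proof.
move=> q1; elim: n => [|n IH]; first by rewrite expr0 mul0r addr0.
rewrite exprS -natr1.
have q0 : 0 <= q by lra.
have := ler_wpM2l q0 IH.
have : 0 <= n%:R * ((q - 1) * (q - 1)) by apply: mulr_ge0 => //; nra.
nra.
Qed.

Lemma exists_exprn_gt (R : realType) (q M : R) : 1 < q -> exists n, M < q ^+ n.
Proof.
move=> q1; pose x := `|M| / (q - 1).
have x0 : 0 <= x by apply: divr_ge0 => //; lra.
exists (Num.Def.archi_bound x).
have := archi_boundP x0; set N := (Num.Def.archi_bound x)%:R => HN.
have := bernoulli_ler_exprn (Num.Def.archi_bound x) (ltW q1); rewrite -/N => HB.
have : `|M| < N * (q - 1) by rewrite -ltr_pdivrMr //; lra.
have := ler_norm M; lra.
Qed.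

Section YoungFunction.
Context {R : realType}.
Variable f : R -> R.
Hypothesis yf : young f.

Lemma young_convex : convex_on_nonneg f. Proof. by case: yf. Qed.
Lemma young0 : f 0 = 0. Proof. by case: yf. Qed.
Lemma young_gt0 t : 0 < t -> 0 < f t. Proof. by case: yf => _ _ + _; apply. Qed.

Lemma young_ge0 t : 0 <= t -> 0 <= f t.
Proof. by rewrite le_eqVlt => /orP[/eqP <-|/young_gt0/ltW//]; rewrite young0. Qed.

Lemma young_le_mul_rderiv s : 0 < s -> f s <= s * rderiv f s.
Proof.
by move=> s0; have := rderiv_support young_convex s0 (lexx 0); rewrite young0; lra.
Qed.

Lemma rderiv_young_gt0 s : 0 < s -> 0 < rderiv f s.
Proof.
move=> s0; have := young_le_mul_rderiv s0; have := young_gt0 s0.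
by move=> fs0 le; rewrite -(pmulr_rgt0 _ s0); apply: lt_le_trans fs0 le.
Qed.

Lemma young_incr x y : 0 <= x -> x < y -> f x < f y.
Proof.
rewrite le_eqVlt => /orP[/eqP <- y0|x0 xy]; first by rewrite young0 young_gt0.
have := rderiv_support young_convex x0 (ltW (lt_trans x0 xy)).
have := rderiv_young_gt0 x0; nra.
Qed.

Lemma young_nondecr x y : 0 <= x -> x <= y -> f x <= f y.
Proof. by move=> x0; rewrite le_eqVlt => /orP[/eqP -> //|/(young_incr x0)/ltW]. Qed.

Lemma lindex_leE t P : 0 < t -> (lindex f t <= P) = (t * rderiv f t <= P * f t).
Proof. by move=> t0; rewrite /lindex ler_pdivrMr // young_gt0. Qed.

Lemma lindex_geE t P : 0 < t -> (P <= lindex f t) = (P * f t <= t * rderiv f t).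
Proof. by move=> t0; rewrite /lindex ler_pdivlMr // young_gt0. Qed.

Lemma lindex_ge1 t : 0 < t -> 1 <= lindex f t.
Proof. by move=> t0; rewrite lindex_geE // mul1r young_le_mul_rderiv. Qed.

(* The support line at [rho * s] evaluated at [s], resp. at [s] evaluated at
   [rho * s]. *)
Lemma lindex_le_growth P rho s : 0 < s -> 1 < rho -> lindex f (rho * s) <= P ->
  (rho - P * (rho - 1)) * f (rho * s) <= rho * f s.
Proof.
move=> s0 rho1; have rs0 : 0 < rho * s by apply: mulr_gt0 => //; lra.
have rho1' : 0 <= rho - 1 by lra.
rewrite lindex_leE // => /(ler_wpM2r rho1').
have := rderiv_support young_convex rs0 (ltW s0); nra.
Qed.

Lemma lindex_ge_growth r rho s : 0 < s -> 1 <= rho -> r <= lindex f s ->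
  (1 + r * (rho - 1)) * f s <= f (rho * s).
Proof.
move=> s0 rho1; have rs0 : 0 <= rho * s by apply: mulr_ge0; lra.
have rho1' : 0 <= rho - 1 by lra.
rewrite lindex_geE // => /(ler_wpM2r rho1').
have := rderiv_support young_convex s0 rs0; nra.
Qed.

End YoungFunction.

Section IteratedGrowth.
Context {R : realType}.
Variable f : R -> R.
Hypothesis yf : young f.

Lemma lindex_le_iter_growth P rho s n : 0 < s -> 1 < rho ->
  0 <= rho - P * (rho - 1) ->
  (forall t, s < t -> t <= rho ^+ n * s -> lindex f t <= P) ->
  (rho - P * (rho - 1)) ^+ n * f (rho ^+ n * s) <= rho ^+ n * f s.
Proof.
move=> s0 rho1 B0; elim: n => [|n IH] HP; first by rewrite !expr0 !mul1r.
have rns : 0 < rho ^+ n * s by apply: mulr_gt0 => //; apply: exprn_gt0; lra.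
have e1 : rho ^+ n.+1 * s = rho * (rho ^+ n * s) by rewrite exprS mulrA.
have le1 : rho ^+ n * s <= rho ^+ n.+1 * s by rewrite e1; nra.
have IH' := IH (fun t st tle => HP t st (le_trans tle le1)).
have rn1 : 1 <= rho ^+ n by apply: exprn_ege1; lra.
have st : s < rho * (rho ^+ n * s) by nra.
have ts : rho * (rho ^+ n * s) <= rho ^+ n.+1 * s by rewrite e1.
have := lindex_le_growth yf rns rho1 (HP _ st ts).
rewrite e1 !exprS => step.
have := ler_wpM2l (exprn_ge0 n B0) step.
have := ler_wpM2l (ltW (lt_trans ltr01 rho1)) IH'; nra.
Qed.

Lemma lindex_ge_iter_growth r rho s n : 0 < s -> 1 < rho ->
  0 <= 1 + r * (rho - 1) ->
  (forall t, s <= t -> t < rho ^+ n * s -> r <= lindex f t) ->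
  (1 + r * (rho - 1)) ^+ n * f s <= f (rho ^+ n * s).
Proof.
move=> s0 rho1 A0; elim: n => [|n IH] Hr; first by rewrite !expr0 !mul1r.
have rns : 0 < rho ^+ n * s by apply: mulr_gt0 => //; apply: exprn_gt0; lra.
have rn1 : 1 <= rho ^+ n by apply: exprn_ege1; lra.
have e1 : rho ^+ n.+1 * s = rho * (rho ^+ n * s) by rewrite exprS mulrA.
have lt1 : rho ^+ n * s < rho ^+ n.+1 * s by rewrite e1; nra.
have IH' := IH (fun t st tle => Hr t st (lt_trans tle lt1)).
have sr : s <= rho ^+ n * s by nra.
have := lindex_ge_growth yf rns (ltW rho1) (Hr _ sr lt1).
rewrite e1 exprS => step.
have := ler_wpM2l A0 IH'; nra.
Qed.

End IteratedGrowth.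

Section Equivalence.
Context {R : realType}.
Implicit Types (f g : R -> R).

Lemma young_equiv_sym f g : young_equiv f g -> young_equiv g f.
Proof.
move=> [C [C1 HC]]; exists C; split => // t t0; have [lo up] := HC t t0.
have C0 : 0 < C by lra.
split; last by rewrite -ler_pdivrMl.
by rewrite ler_pdivrMl // mulrC.
Qed.

Lemma young_equiv_le f g : young_equiv f g ->
  exists2 C, 0 < C & forall t, 0 <= t -> f t <= C * g t.
Proof. by move=> [C [C1 HC]]; exists C => [|t t0]; [lra | exact: (HC t t0).2]. Qed.

(* Chaining the two growth estimates with the two equivalence bounds yields
   [(A * B / rho) ^+ n <= C1 * C2] for every [n]. *)
Lemma young_equiv_growth_absurd g1 g2 rho A B : young g1 -> young g2 ->
  young_equiv g1 g2 -> 0 < rho -> 0 <= A -> 0 <= B -> rho < A * B ->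
  (forall n, exists2 s, 0 < s & A ^+ n * g1 s <= g1 (rho ^+ n * s) /\
       B ^+ n * g2 (rho ^+ n * s) <= rho ^+ n * g2 s) -> False.
Proof.
move=> y1 y2 eq12 r0 A0 B0 rAB H.
have [C1 C10 HC1] := young_equiv_le eq12.
have [C2 C20 HC2] := young_equiv_le (young_equiv_sym eq12).
have q1 : 1 < A * B / rho by rewrite ltr_pdivlMr // mul1r.
have [n Hn] := exists_exprn_gt (C1 * C2) q1.
have [s s0 [H1 H2]] := H n.
have rn0 : 0 < rho ^+ n by apply: exprn_gt0.
have u0 : 0 <= rho ^+ n * s by apply: mulr_ge0; lra.
have g1s := young_gt0 y1 s0.
have c1 := ler_wpM2l (exprn_ge0 n B0) H1.
have c2 := ler_wpM2l (exprn_ge0 n B0) (HC1 _ u0).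
have c3 := ler_wpM2l (ltW C10) H2.
have c4 := ler_wpM2l (mulr_ge0 (ltW C10) (ltW rn0)) (HC2 _ (ltW s0)).
have : (A * B) ^+ n * g1 s <= C1 * C2 * rho ^+ n * g1 s.
  by rewrite exprMn; nra.
rewrite ler_pM2r // -ler_pdivrMr // -expr_div_n; lra.
Qed.

Lemma exists_growth_ratio (P r : R) : 0 < P -> P < r -> exists rho, [/\ 1 < rho,
  0 <= rho - P * (rho - 1), 0 <= 1 + r * (rho - 1) &
  rho < (1 + r * (rho - 1)) * (rho - P * (rho - 1))].
Proof.
move=> P0 Pr; pose x := (r - P) / (2 * r * P).
have x0 : 0 < x by apply: divr_gt0; [lra | nra].
have xe : x * (2 * r * P) = r - P by rewrite /x mulfVK //; nra.
exists (1 + x); split; [lra | nra | nra |].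
have : x * ((r - P) + r * (1 - P) * x) > 0 by apply: mulr_gt0 => //; nra.
nra.
Qed.

End Equivalence.

Section NearEnd.
Context {R : realType}.
Implicit Types (P Q : R -> Prop) (f g : R -> R).

Definition near_end P : Prop :=
  (\forall t \near 0^'+, P t) \/ (\forall t \near +oo, P t).

Lemma near_right0_itv P : (\forall t \near 0^'+, P t) ->
  exists2 d, 0 < d & forall t, 0 < t -> t <= d -> P t.
Proof.
move=> /nbhs_ballP[e /= e0 He]; exists (e / 2) => [|t t0 td]; first by lra.
by apply: He => //; rewrite /ball /= sub0r normrN gtr0_norm //; lra.
Qed.

Lemma near_pinfty_itv P : (\forall t \near +oo, P t) ->
  exists2 T, 0 < T & forall t, T <= t -> P t.
Proof.
move=> [M [_ HM]]; exists (Num.max 1 (M + 1)) => [|t]; first by rewrite lt_max ltr01.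
by rewrite ge_max => /andP[_ Mt]; apply: HM; lra.
Qed.

Lemma near_end_mono P Q : near_end P -> (forall t, 0 < t -> P t -> Q t) ->
  near_end Q.
Proof.
move=> [H|H] PQ; [left | right]; near=> t; apply: PQ.
- by near: t; exact: nbhs_right_gt.
- by near: t; exact: H.
- by near: t; apply: nbhs_pinfty_gt; exact: num_real.
- by near: t; exact: H.
Unshelve. all: by end_near.
Qed.

Lemma near_end_geometric P rho n : 1 <= rho -> near_end P ->
  exists2 s, 0 < s & forall t, s <= t -> t <= rho ^+ n * s -> P t.
Proof.
move=> rho1 [/near_right0_itv[d d0 Hd]|/near_pinfty_itv[T T0 HT]].
- have rn0 : 0 < rho ^+ n by apply: exprn_gt0; lra.
  have s0 : 0 < d / rho ^+ n by apply: divr_gt0.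
  exists (d / rho ^+ n) => // t st; rewrite mulrC divfK ?gt_eqF //.
  exact/Hd/lt_le_trans/st.
- by exists T => // t Tt _; exact: HT.
Qed.

Lemma young_equiv_lindex_gap_absurd g1 g2 r1 r2 : young g1 -> young g2 ->
  young_equiv g1 g2 -> r2 < r1 ->
  near_end (fun t => r1 <= lindex g1 t /\ lindex g2 t <= r2) -> False.
Proof.
move=> y1 y2 eq12 r21 Hend.
have r20 : 0 < r2.
  have [s s0 Hs] := near_end_geometric 0 (lexx 1) Hend.
  have [_ le] := Hs s (lexx s) ltac:(by rewrite expr0 mul1r).
  by have := lindex_ge1 y2 s0; lra.
have [rho [rho1 B0 A0 rAB]] := exists_growth_ratio r20 r21.
apply: (young_equiv_growth_absurd y1 y2 eq12 _ A0 B0 rAB); first lra.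
move=> n; have [s s0 Hs] := near_end_geometric n (ltW rho1) Hend.
exists s => //; split.
- by apply: lindex_ge_iter_growth => // t st tle; exact: (Hs t st (ltW tle)).1.
- by apply: lindex_le_iter_growth => // t st tle; exact: (Hs t (ltW st) tle).2.
Qed.

Lemma lindex_le_p_exp g t : 0 < t -> ((lindex g t)%:E <= p_exp g)%E.
Proof. by move=> t0; apply: ereal_sup_ubound; exists t. Qed.

Lemma q_exp_le_lindex g t : 0 < t -> (q_exp g <= (lindex g t)%:E)%E.
Proof. by move=> t0; apply: ereal_inf_lbound; exists t. Qed.

Lemma p_exp_ge f g p : young f -> young g -> young_equiv f g ->
  (forall r, r < p -> near_end (fun t => r < lindex f t)) -> (p%:E <= p_exp g)%E.
Proof.
move=> yf yg eqfg Hf; rewrite leNgt; apply/negP => lt.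
have := lindex_le_p_exp g ltr01.
move: lt; case Ep: (p_exp g) => [P| |] //=; rewrite lte_fin => Pp _.
have HP t : 0 < t -> lindex g t <= P by move=> t0; rewrite -lee_fin -Ep lindex_le_p_exp.
have [Pr rp] : P < (p + P) / 2 /\ (p + P) / 2 < p by split; lra.
apply: (young_equiv_lindex_gap_absurd yf yg eqfg Pr).
by apply: near_end_mono (Hf _ rp) _ => t t0 lt; split; [exact: ltW | exact: HP].
Qed.

Lemma q_exp_le f g p : young f -> young g -> young_equiv f g ->
  (forall r, p < r -> near_end (fun t => lindex f t < r)) -> (q_exp g <= p%:E)%E.
Proof.
move=> yf yg eqfg Hf; rewrite leNgt; apply/negP => lt.
have := q_exp_le_lindex g ltr01.
move: lt; case Eq: (q_exp g) => [Q| |] //=; rewrite lte_fin => pQ _.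
have HQ t : 0 < t -> Q <= lindex g t by move=> t0; rewrite -lee_fin -Eq q_exp_le_lindex.
have [rQ pr] : (p + Q) / 2 < Q /\ p < (p + Q) / 2 by split; lra.
apply: (young_equiv_lindex_gap_absurd yg yf (young_equiv_sym eqfg) rQ).
by apply: near_end_mono (Hf _ pr) _ => t t0 lt; split; [exact: HQ | exact: ltW].
Qed.

Lemma p_class_ge f p : young f ->
  (forall r, r < p -> near_end (fun t => r < lindex f t)) -> (p%:E <= p_class f)%E.
Proof.
move=> yf Hf; apply: le_ereal_inf_tmp => _ [g [yg eqfg] <-].
exact: p_exp_ge yf yg eqfg Hf.
Qed.

Lemma q_class_le f p : young f ->
  (forall r, p < r -> near_end (fun t => lindex f t < r)) -> (q_class f <= p%:E)%E.
Proof.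
move=> yf Hf; apply: ge_ereal_sup => _ [g [yg eqfg] <-].
exact: q_exp_le yf yg eqfg Hf.
Qed.

Lemma near_end_lt_lindex f p0 pinf r : lindex f t @[t --> 0^'+] --> p0 ->
  lindex f t @[t --> +oo] --> pinf -> r < Num.max p0 pinf ->
  near_end (fun t => r < lindex f t).
Proof.
move=> h0 hoo; rewrite lt_max => /orP[rp|rp]; [left | right].
- exact: cvgr_gt h0 _ rp.
- exact: cvgr_gt hoo _ rp.
Qed.

Lemma near_end_lindex_lt f p0 pinf r : lindex f t @[t --> 0^'+] --> p0 ->
  lindex f t @[t --> +oo] --> pinf -> Num.min p0 pinf < r ->
  near_end (fun t => lindex f t < r).
Proof.
move=> h0 hoo; rewrite gt_min => /orP[rp|rp]; [left | right].
- exact: cvgr_lt h0 _ rp.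
- exact: cvgr_lt hoo _ rp.
Qed.

End NearEnd.

Lemma rderiv_affine (R : realType) (c m s t : R) :
  rderiv (fun x => c + m * (x - s)) t = m.
Proof.
apply: cvg_lim => //; apply: cvg_near_cst; near=> k.
have k0 : k != 0 by apply: lt0r_neq0; near: k; exact: nbhs_right_gt.
by rewrite /= (_ : c + m * (t + k - s) - (c + m * (t - s)) = m * k) ?mulfK //; ring.
Unshelve. all: by end_near.
Qed.

Section Majorant.
Context {R : realType}.
Variables (f h : R -> R) (K : R).
Hypotheses (yf : young f) (ch : convex_on_nonneg h) (h0 : h 0 = 0) (K0 : 0 <= K).

Lemma young_max : young (fun x => Num.max (f x) (K * h x)).
Proof.
have [_ _ _ f_oo] := yf.
have f_le t : f t <= Num.max (f t) (K * h t) by rewrite le_max lexx.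
split.
- exact: convex_on_nonneg_max (young_convex yf) (convex_on_nonneg_scale K0 ch).
- by rewrite h0 mulr0 young0 // maxxx.
- by move=> t t0; apply: lt_le_trans (young_gt0 yf t0) (f_le t).
- move/cvgryPge: f_oo => f_oo; apply/cvgryPge => M.
  by apply: filterS (f_oo M) => t /le_trans; apply.
Qed.

Lemma young_equiv_max C : 0 <= C -> (forall t, 0 <= t -> h t <= C * f t) ->
  young_equiv f (fun x => Num.max (f x) (K * h x)).
Proof.
move=> C0 hC; have KC : 0 <= K * C by exact: mulr_ge0.
exists (1 + K * C); split => [|t t0]; first lra.
have ft := young_ge0 yf t0.
have gf : f t <= Num.max (f t) (K * h t) by rewrite le_max lexx.
have KCf := mulr_ge0 KC ft.
have gu : Num.max (f t) (K * h t) <= (1 + K * C) * f t.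
  rewrite ge_max; apply/andP; split; first lra.
  apply: le_trans (ler_wpM2l K0 (hC t t0)) _.
  by rewrite mulrA mulrDl mul1r lerDr.
split; last first.
  by apply: (le_trans gf); rewrite mulrDl mul1r lerDl mulr_ge0 // (le_trans ft gf).
have KC1 : 0 < 1 + K * C by lra.
by rewrite ler_pdivrMl // mulrC.
Qed.

End Majorant.

Definition tangent_after (R : realType) (f : R -> R) (S t : R) : R :=
  if t <= S then f t else f S + rderiv f S * (t - S).

Section TangentAfter.
Context {R : realType}.
Variables (f : R -> R) (S : R).
Hypotheses (yf : young f) (S0 : 0 < S).
Let cf := young_convex yf.
Let L := tangent_after f S.

Lemma tangent_afterE_le t : t <= S -> L t = f t.
Proof. by move=> tS; rewrite /L /tangent_after tS. Qed.

Lemma tangent_afterE_ge t : S <= t -> L t = f S + rderiv f S * (t - S).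
Proof.
rewrite le_eqVlt => /orP[/eqP <-|St].
  by rewrite tangent_afterE_le // subrr mulr0 addr0.
by rewrite /L /tangent_after ifF // leNgt St.
Qed.

Lemma tangent_after0 : L 0 = 0.
Proof. by rewrite tangent_afterE_le ?young0 // ltW. Qed.

Lemma tangent_after_le t : 0 <= t -> L t <= f t.
Proof.
move=> t0; case: (leP t S) => [tS|/ltW St]; first by rewrite tangent_afterE_le.
by rewrite tangent_afterE_ge //; exact: (rderiv_support cf S0 t0).
Qed.

Lemma tangent_after_ge t : S <= t -> f S <= L t.
Proof.
move=> St; rewrite tangent_afterE_ge // lerDl.
by apply: mulr_ge0; [exact/ltW/rderiv_young_gt0 | lra].
Qed.

Lemma tangent_after_ge0 t : 0 <= t -> 0 <= L t.
Proof.
move=> t0; case: (leP t S) => [tS|/ltW St].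
  by rewrite tangent_afterE_le // young_ge0.
exact: le_trans (young_ge0 yf (ltW S0)) (tangent_after_ge St).
Qed.

Lemma convex_tangent_after : convex_on_nonneg L.
Proof.
apply: convex_on_nonneg_support => [|t t0|z z0].
- exact: tangent_after0.
- exact: tangent_after_ge0.
case: (leP z S) => [zS|/ltW Sz].
- exists (rderiv f z) => x x0; rewrite tangent_afterE_le //.
  case: (leP x S) => [xS|/ltW Sx].
    by rewrite tangent_afterE_le //; exact: (rderiv_support cf z0 x0).
  rewrite tangent_afterE_ge //.
  have := rderiv_support cf z0 (ltW S0); have := rderiv_nondecr cf z0 zS.
  have : 0 <= x - S by lra.
  nra.
- exists (rderiv f S) => x x0; rewrite tangent_afterE_ge //.
  case: (leP x S) => [xS|/ltW Sx]; last by rewrite tangent_afterE_ge //; lra.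
  by rewrite tangent_afterE_le //; have := rderiv_support cf S0 x0; lra.
Qed.

Lemma rderiv_tangent_after t : 0 < t ->
  rderiv L t = if t < S then rderiv f t else rderiv f S.
Proof.
move=> t0; case: (ltP t S) => tS.
  apply: (rderiv_near_eq cf t0); first by rewrite tangent_afterE_le // ltW.
  near=> k; rewrite tangent_afterE_le //.
  have : k < S - t by near: k; apply: nbhs_right_lt; lra.
  lra.
rewrite -(rderiv_affine (f S) (rderiv f S) S t).
have c_aff : convex_on_nonneg (fun x => f S + rderiv f S * (x - S)).
  by move=> x y l *; rewrite le_eqVlt; apply/orP; left; apply/eqP; ring.
apply: (rderiv_near_eq c_aff t0); first by rewrite tangent_afterE_ge.
near=> k; rewrite tangent_afterE_ge //.
have : 0 < k by near: k; exact: nbhs_right_gt.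
lra.
Unshelve. all: by end_near.
Qed.

End TangentAfter.

(* Between [d] and [T] the index of [f] is not controlled.  There the maximum
   with [K * L], [L] the tangent continuation of [f] from [d / 2], takes over:
   [K] is chosen so that [a * K * L t >= T * f'(T) >= t * f'(t)] on [[d, T]],
   while the index of [L] stays below [a]. *)
Section IndexUpperMajorant.
Context {R : realType}.
Variables (f : R -> R) (a d T : R).
Hypotheses (yf : young f) (d0 : 0 < d) (dT : d <= T)
  (Hd : forall t, 0 < t -> t <= d -> lindex f t <= a)
  (HT : forall t, T <= t -> lindex f t <= a).

Let cf := young_convex yf.
Let S := d / 2.
Let L := tangent_after f S.
Let K := T * rderiv f T / (a * f S).
Let g x := Num.max (f x) (K * L x).

Let S0 : 0 < S. Proof. by rewrite divr_gt0. Qed.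
Let Sd : S < d. Proof. by rewrite /S ltr_pdivrMr // mulr_natr mulr2n ltrDr. Qed.
Let T0 : 0 < T. Proof. by move: d0 dT; lra. Qed.
Let a1 : 1 <= a. Proof. by apply: le_trans (lindex_ge1 yf d0) (Hd d0 (lexx d)). Qed.
Let a0 : 0 <= a. Proof. exact: le_trans ler01 a1. Qed.
Let fS0 : 0 < f S. Proof. exact: young_gt0. Qed.
Let aS0 : 0 < a * f S. Proof. by apply: mulr_gt0 => //; move: a1; lra. Qed.
Let K0 : 0 <= K.
Proof.
by apply: divr_ge0 (ltW aS0); apply: mulr_ge0 (ltW T0) (ltW (rderiv_young_gt0 yf T0)).
Qed.
Let KaS : K * (a * f S) = T * rderiv f T. Proof. by rewrite /K divfK // gt_eqF. Qed.

Let f_le_g t : f t <= g t. Proof. by rewrite /g le_max lexx. Qed.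
Let KL_le_g t : K * L t <= g t. Proof. by rewrite /g le_max lexx orbT. Qed.

Let rderiv_f_le t : 0 < t -> t * rderiv f t <= a * g t.
Proof.
move=> t0; have ag : a * f t <= a * g t by rewrite ler_wpM2l.
case: (leP t d) => [td|dt].
  by apply: le_trans ag; rewrite -lindex_leE //; exact: Hd.
case: (leP T t) => [Tt|tT].
  by apply: le_trans ag; rewrite -lindex_leE //; exact: HT.
have mid : t * rderiv f t <= T * rderiv f T.
  apply: ler_pM; [lra | exact/ltW/rderiv_young_gt0 | exact: ltW |].
  exact: (rderiv_nondecr cf t0 (ltW tT)).
apply: le_trans mid _; rewrite -KaS mulrCA ler_wpM2l //.
apply: le_trans (KL_le_g t); rewrite ler_wpM2l //.
exact: (tangent_after_ge yf S0 (ltW (lt_trans Sd dt))).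
Qed.

Let rderiv_L_le t : 0 < t -> K * (t * rderiv L t) <= a * g t.
Proof.
move=> t0; apply: (@le_trans _ _ (a * (K * L t))); last by rewrite ler_wpM2l.
rewrite [a * _]mulrCA ler_wpM2l // /L rderiv_tangent_after //; case: ltP => [tS|St].
  rewrite tangent_afterE_le; last exact: ltW.
  by rewrite -lindex_leE //; apply: Hd => //; exact: (ltW (lt_trans tS Sd)).
have SDS : S * rderiv f S <= a * f S.
  by rewrite -lindex_leE //; apply: Hd => //; exact: (ltW Sd).
have DS0 := rderiv_young_gt0 yf S0.
rewrite tangent_afterE_ge //.
have : 0 <= (a - 1) * (rderiv f S * (t - S)).
  by apply: mulr_ge0; [move: a1 | apply: mulr_ge0]; lra.
lra.
Qed.

Let young_g : young g.
Proof. exact: (young_max yf (convex_tangent_after yf S0) (tangent_after0 yf S0) K0). Qed.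

Lemma exists_young_equiv_lindex_le :
  exists g, [/\ young g, young_equiv f g & forall t, 0 < t -> lindex g t <= a].
Proof.
exists g; split.
- exact: (young_g).
- apply: (young_equiv_max yf K0 ler01) => t t0; rewrite mul1r.
  exact: (tangent_after_le yf S0 t0).
move=> t t0; rewrite (lindex_leE young_g) //.
have cKL := convex_on_nonneg_scale K0 (convex_tangent_after yf S0).
apply: le_trans (ler_wpM2l (ltW t0) (rderiv_max_le cf cKL t0)) _.
rewrite (rderivZ (convex_tangent_after yf S0)) // -ler_pdivlMl // ge_max.
rewrite !ler_pdivlMl // rderiv_f_le //=.
by rewrite mulrCA rderiv_L_le.
Qed.

End IndexUpperMajorant.

Section BoundedIndex.
Context {R : realType}.
Variable f : R -> R.
Hypothesis yf : young f.

Lemma lindex_bounded P1 P2 : (\forall t \near 0^'+, lindex f t <= P1) ->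
  (\forall t \near +oo, lindex f t <= P2) ->
  exists2 P, 0 < P & forall t, 0 < t -> lindex f t <= P.
Proof.
move=> /near_right0_itv[d d0 Hd] /near_pinfty_itv[T T0 HT].
pose M := Num.max T d.
have fd := young_gt0 yf d0.
pose P := Num.max 1 (Num.max P1 (Num.max P2 (M * rderiv f M / f d))).
exists P => [|t t0]; first by rewrite lt_max ltr01.
case: (leP t d) => [td|dt].
  by apply: le_trans (Hd t t0 td) _; rewrite /P !le_max lexx /= orbT.
case: (leP M t) => [Mt|tM].
  apply: le_trans (HT t _) _; first by move: Mt; rewrite ge_max => /andP[].
  by rewrite /P !le_max lexx /= !orbT.
apply: (@le_trans _ _ (M * rderiv f M / f d)); last by rewrite /P !le_max lexx /= !orbT.
have ft : f d <= f t by apply: young_nondecr => //; lra.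
have D1 := rderiv_nondecr (young_convex yf) t0 (ltW tM).
have D0 := rderiv_young_gt0 yf t0.
rewrite lindex_leE // mulrAC ler_pdivlMr //.
have h1 : t * rderiv f t <= M * rderiv f M by apply: ler_pM; lra.
apply: le_trans (ler_pM _ _ h1 ft) _; [nra | lra | by rewrite mulrC].
Qed.

Lemma delta2_of_lindex_bounded P c : (forall t, 0 < t -> lindex f t <= P) ->
  0 <= c -> exists2 C, 0 <= C & forall t, 0 <= t -> f (c * t) <= C * f t.
Proof.
move=> HP c0; have P1 : 1 <= P := le_trans (lindex_ge1 yf ltr01) (HP 1 ltr01).
pose rho := 1 + (2 * P)^-1.
have ip : 0 < (2 * P)^-1 by rewrite invr_gt0; lra.
have rho1 : 1 < rho by rewrite /rho; lra.
have B0 : 0 < rho - P * (rho - 1).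
  have Px : P * (2 * P)^-1 = 1 / 2 by field; lra.
  by rewrite /rho; lra.
have [n Hn] := exists_exprn_gt c rho1.
have rn0 : 0 < rho ^+ n by apply: exprn_gt0; lra.
have Bn0 : 0 < (rho - P * (rho - 1)) ^+ n by apply: exprn_gt0.
exists (rho ^+ n / (rho - P * (rho - 1)) ^+ n) => [|t].
  by apply: divr_ge0; apply: ltW.
rewrite le_eqVlt => /orP[/eqP <-|t0]; first by rewrite mulr0 young0 // mulr0.
have := lindex_le_iter_growth (n := n) yf t0 rho1 (ltW B0)
  (fun s ts _ => HP s (lt_trans t0 ts)).
have ct : c * t <= rho ^+ n * t by rewrite ler_pM2r //; apply: ltW.
have := young_nondecr yf (mulr_ge0 c0 (ltW t0)) ct.
rewrite mulrAC ler_pdivlMr //.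
have := young_ge0 yf (ltW t0).
nra.
Qed.

End BoundedIndex.

(* Where the majorant [K * N] is active, [N t] is [f (c * t)] shifted down with
   [c * t > T], so its index is at least that of [f] at [c * t]. *)
Section IndexLowerMajorant.
Context {R : realType}.
Variables (f : R -> R) (b d T P c D K : R).
Hypotheses (yf : young f) (b0 : 0 <= b) (d0 : 0 < d) (dT : d <= T)
  (HP : forall t, 0 < t -> lindex f t <= P)
  (Hd : forall t, 0 < t -> t <= d -> b <= lindex f t)
  (HT : forall t, T <= t -> b <= lindex f t)
  (c0 : 0 < c) (fTD : f T <= D) (K0 : 0 <= K) (gap : f T < K * (f (c * d) - D)).

Let N t := Num.max (f (c * t) - D) 0.
Let g t := Num.max (f t) (K * N t).

Let D0 : 0 < D.
Proof. exact: lt_le_trans (young_gt0 yf (lt_le_trans d0 dT)) fTD. Qed.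

Let convex_N : convex_on_nonneg N.
Proof.
apply: convex_on_nonneg_max.
  exact: (convex_on_nonneg_comp_scale D (ltW c0) (young_convex yf)).
by move=> *; rewrite !mulr0 addr0.
Qed.

Let N0 : N 0 = 0.
Proof. by rewrite /N mulr0 (young0 yf) sub0r; apply/max_r; rewrite oppr_le0 ltW. Qed.

Let young_g : young g. Proof. exact: (young_max yf convex_N N0 K0). Qed.

Let young_equiv_g : young_equiv f g.
Proof.
have [C C0 HC] := delta2_of_lindex_bounded yf HP (ltW c0).
apply: (young_equiv_max yf K0 C0) => t t0; apply: le_trans (HC t t0).
have fct := young_ge0 yf (mulr_ge0 (ltW c0) t0).
by rewrite /N ge_max fct andbT lerBlDr lerDl; apply: ltW.
Qed.

Let N_active t : 0 < t -> f t < K * N t -> N t = f (c * t) - D /\ T < c * t.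
Proof.
move=> t0 lt; have KN : 0 < K * N t := lt_trans (young_gt0 yf t0) lt.
have Npos : 0 < N t.
  rewrite lt_neqAle /N le_max lexx orbT andbT.
  by apply: contraTneq KN => Nt0; rewrite /N -Nt0 mulr0 ltxx.
have NE : N t = f (c * t) - D.
  apply/max_l; rewrite leNgt; apply: contraTN Npos => neg.
  by rewrite /N (max_r (ltW neg)) ltxx.
split => //; rewrite ltNge; apply/negP => cT.
have := young_nondecr yf (mulr_ge0 (ltW c0) (ltW t0)) cT.
by move: Npos fTD; rewrite NE; lra.
Qed.

Let f_active_ends t : 0 < t -> K * N t <= f t -> t <= d \/ T <= t.
Proof.
move=> t0 le; case: (leP t d) => [|dt]; first by left.
case: (leP T t) => [|tT]; first by right.
have fdt : f (c * d) <= f (c * t).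
  apply: (young_nondecr yf (mulr_ge0 (ltW c0) (ltW d0))).
  by rewrite ler_pM2l // ltW.
have : K * (f (c * d) - D) <= K * N t.
  by rewrite ler_wpM2l // /N le_max; apply/orP; left; lra.
have := young_nondecr yf (ltW t0) (ltW tT).
move: gap; lra.
Qed.

Let rderiv_f_le_g t : 0 < t -> K * N t <= f t -> rderiv f t <= rderiv g t.
Proof.
move=> t0 le; apply: (rderiv_ge (young_convex young_g) t0) => k k0.
apply: le_trans (rderiv_le_diff_quot (young_convex yf) t0 k0) _.
apply: diff_quot_le_touch => //; first by rewrite /g max_l.
by rewrite /g le_max lexx.
Qed.

Let rderiv_N_le_g t : 0 < t -> f t < K * N t ->
  K * c * rderiv f (c * t) <= rderiv g t.
Proof.
move=> t0 lt; have [NE _] := N_active t0 lt.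
have ct0 : 0 < c * t by exact: mulr_gt0.
apply: (rderiv_ge (young_convex young_g) t0) => k k0.
have ck0 : 0 < c * k by exact: mulr_gt0.
have Kc0 : 0 <= K * c := mulr_ge0 K0 (ltW c0).
apply: le_trans (ler_wpM2l Kc0 (rderiv_le_diff_quot (young_convex yf) ct0 ck0)) _.
have -> : K * c * diff_quot f (c * t) (c * k) =
          diff_quot (fun x => K * (f (c * x) - D)) t k.
  rewrite /diff_quot [c * (t + k)]mulrDr; field.
  by apply/andP; split; apply: lt0r_neq0.
apply: diff_quot_le_touch => //; first by rewrite /g (max_r (ltW lt)) NE.
by rewrite /g le_max; apply/orP; right; rewrite ler_wpM2l // /N le_max lexx.
Qed.

Lemma exists_young_equiv_lindex_ge :
  exists g, [/\ young g, young_equiv f g & forall t, 0 < t -> b <= lindex g t].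
Proof.
exists g; split => //; move=> t t0; rewrite (lindex_geE young_g) //.
case: (leP (K * N t) (f t)) => [le|lt].
- have gf : g t = f t by rewrite /g max_l.
  have fb : b * f t <= t * rderiv f t.
    rewrite -lindex_geE //.
    by case: (f_active_ends t0 le) => [td|Tt]; [exact: Hd | exact: HT].
  rewrite gf; apply: le_trans fb _; rewrite ler_wpM2l //; [lra | exact: rderiv_f_le_g].
- have [NE cT] := N_active t0 lt.
  have gN : g t = K * (f (c * t) - D) by rewrite /g (max_r (ltW lt)) NE.
  have ct0 : 0 < c * t by exact: mulr_gt0.
  have fb : b * f (c * t) <= c * t * rderiv f (c * t).
    by rewrite -lindex_geE //; apply: HT; lra.
  have := ler_wpM2l (ltW t0) (rderiv_N_le_g t0 lt).
  have := ler_wpM2l K0 fb.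
  have := mulr_ge0 K0 (mulr_ge0 b0 (ltW D0)).
  rewrite gN; lra.
Qed.

End IndexLowerMajorant.

Section ClassExponents.
Context {R : realType}.
Variable f : R -> R.
Hypothesis yf : young f.

Lemma p_class_le a : (\forall t \near 0^'+, lindex f t <= a) ->
  (\forall t \near +oo, lindex f t <= a) -> (p_class f <= a%:E)%E.
Proof.
move=> /near_right0_itv[d d0 Hd] /near_pinfty_itv[T _ HT].
have dM : d <= Num.max T d by rewrite le_max lexx orbT.
have HM t : Num.max T d <= t -> lindex f t <= a.
  by rewrite ge_max => /andP[Tt _]; exact: HT.
have [g [yg eqfg Hg]] := exists_young_equiv_lindex_le yf d0 dM Hd HM.
apply: le_trans (ereal_inf_lbound _) _; first by exists g.
by apply: ge_ereal_sup => _ [t t0 <-]; rewrite lee_fin; exact: Hg.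
Qed.

(* The majorant is [max (f t) (K * N t)] with [N t = max (f (c * t) - f M) 0],
   where [c * d = 2 * M] and [K] makes [K * N] exceed [f] on [[d, M]]. *)
Lemma q_class_ge b : (exists2 P, 0 < P & forall t, 0 < t -> lindex f t <= P) ->
  (\forall t \near 0^'+, b <= lindex f t) ->
  (\forall t \near +oo, b <= lindex f t) -> (b%:E <= q_class f)%E.
Proof.
move=> [P _ HP] /near_right0_itv[d d0 Hd] /near_pinfty_itv[T _ HT].
pose M := Num.max T d; pose b' := Num.max b 0.
have dM : d <= M by rewrite le_max lexx orbT.
have M0 : 0 < M := lt_le_trans d0 dM.
have b'_le t : 0 < t -> b <= lindex f t -> b' <= lindex f t.
  by move=> t0 bt; rewrite ge_max bt (le_trans ler01) // lindex_ge1.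
have Hd' t : 0 < t -> t <= d -> b' <= lindex f t by move=> t0 td; apply/b'_le/Hd.
have HM t : M <= t -> b' <= lindex f t.
  move=> Mt; apply: b'_le; first exact: lt_le_trans M0 Mt.
  by apply: HT; move: Mt; rewrite ge_max => /andP[].
pose c := 2 * M / d; pose K := (f M + 1) / (f (2 * M) - f M).
have c0 : 0 < c by rewrite divr_gt0 // mulr_gt0.
have cd : c * d = 2 * M by rewrite divfK // gt_eqF.
have step : 0 < f (2 * M) - f M.
  by rewrite subr_gt0 (young_incr yf (ltW M0)) //; lra.
have K0 : 0 <= K by apply: divr_ge0; [have := young_ge0 yf (ltW M0); lra | exact: ltW].
have gap : f M < K * (f (c * d) - f M) by rewrite cd divfK ?gt_eqF //; lra.
have b'0 : 0 <= b' by rewrite le_max lexx orbT.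
have [g [yg eqfg Hg]] :=
  exists_young_equiv_lindex_ge yf b'0 d0 dM HP Hd' HM c0 (lexx (f M)) K0 gap.
apply: le_trans (ereal_sup_ubound _); last by exists g.
apply: le_ereal_inf_tmp => _ [t t0 <-]; rewrite lee_fin.
by apply: le_trans (Hg t t0); rewrite le_max lexx.
Qed.

Lemma p_class_cvg p0 pinf : lindex f t @[t --> 0^'+] --> p0 ->
  lindex f t @[t --> +oo] --> pinf -> p_class f = (Num.max p0 pinf)%:E.
Proof.
move=> h0 hoo; apply/le_anti/andP; split; last first.
  by apply: (p_class_ge yf) => r; exact: near_end_lt_lindex h0 hoo.
apply/lee_addgt0Pr => e e0; rewrite -EFinD.
have [p0m pinfm] : p0 < Num.max p0 pinf + e /\ pinf < Num.max p0 pinf + e.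
  have [] : p0 <= Num.max p0 pinf /\ pinf <= Num.max p0 pinf.
    by rewrite !le_max !lexx orbT.
  by split; lra.
by apply: p_class_le; [exact: cvgr_le _ h0 _ p0m | exact: cvgr_le _ hoo _ pinfm].
Qed.

Lemma q_class_cvg p0 pinf : lindex f t @[t --> 0^'+] --> p0 ->
  lindex f t @[t --> +oo] --> pinf -> q_class f = (Num.min p0 pinf)%:E.
Proof.
move=> h0 hoo; apply/le_anti/andP; split.
  by apply: (q_class_le yf) => r; exact: near_end_lindex_lt h0 hoo.
apply/lee_subgt0Pr => e e0; rewrite -EFinB.
have [p01 pinf1] : p0 < p0 + 1 /\ pinf < pinf + 1 by split; lra.
have bounded := lindex_bounded yf (cvgr_le _ h0 _ p01) (cvgr_le _ hoo _ pinf1).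
have [p0m pinfm] : Num.min p0 pinf - e < p0 /\ Num.min p0 pinf - e < pinf.
  have [] : Num.min p0 pinf <= p0 /\ Num.min p0 pinf <= pinf.
    by rewrite !ge_min !lexx orbT.
  by split; lra.
apply: q_class_ge; first exact: bounded.
- exact: cvgr_ge _ h0 _ p0m.
- exact: cvgr_ge _ hoo _ pinfm.
Qed.

End ClassExponents.

Unset Implicit Arguments.

Theorem mainTheorem12 (R : realType) (Phi : R -> R) (p0 pinf : R) :
  young Phi ->
  lindex Phi t @[t --> 0^'+] --> p0 ->
  lindex Phi t @[t --> +oo] --> pinf ->
  p_class Phi = (Num.max p0 pinf)%:E /\ q_class Phi = (Num.min p0 pinf)%:E.
Proof. by move=> yPhi h0 hoo; split; [exact: p_class_cvg | exact: q_class_cvg]. Qed.
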